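(* Let $n,l$ be integers with $1\le l\le n-1$ and set $b=l/n$. Let $S_{\mathrm{Indep}}\sim\mathrm{Bin}(n,b)$, and let $S_{\mathrm{Fixed},1}$ be the number of elements of $\{1,\dots,n\}$ contained in a uniformly random $2l$-element subset of $\{1,\dots,2n\}$, i.e. $\Pr(S_{\mathrm{Fixed},1}=k)=\binom{2l}{k}\binom{2n-2l}{n-k}/\binom{2n}{n}$. Then for every integer $k$ with $0\le k\le n$, \[ \frac{\Pr(S_{\mathrm{Fixed},1}=k)}{\Pr(S_{\mathrm{Indep}}=k)}\le 2. \]
   Context: Binomial coefficients $\binom{a}{k}$ are $0$ when $k<0$ or $k>a$. *)

From mathcomp Require Import all_boot all_order all_algebra.
Set Implicit Arguments. Unset Strict Implicit. Unset Printing Implicit Defensive.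
Import Order.TTheory GRing.Theory Num.Theory.
Local Open Scope ring_scope.

Definition binom_pmf (n : nat) (b : rat) (k : nat) : rat :=
  ('C(n, k))%:R * b ^+ k * (1 - b) ^+ (n - k).

(* Pr(S_Fixed,1 = k): hypergeometric, number of elements of {1..n} in a uniform
   random 2l-subset of {1..2n}.  'C(a,k) = 0 for k > a as in the paper. *)
Definition fixed_pmf (n l k : nat) : rat :=
  ('C(2 * l, k) * 'C(2 * n - 2 * l, n - k))%:R / ('C(2 * n, n))%:R.

From mathcomp Require Import all_boot all_order all_algebra.
From mathcomp Require Import ring lra zify.
Import Order.TTheory GRing.Theory Num.Theory.
Local Open Scope ring_scope.

(* Write n = l + m with l, m >= 1.  Clearing denominators,
     Pr(S_Fixed,1 = k) / Pr(S_Indep = k)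
       = [C(2l,k) C(2m,n-k) / (C(n,k) l^k m^(n-k))] * n^n / C(2n,n).
   The bracket, pmf_ratio l m k, is unimodal in k with its maximum at k = l:
   the ratio of two consecutive values is (2l-k) m / (l (m-l+k+1)), which is
   >= 1 exactly when k < l (lemma ratio_step and its consequences).  It thus
   remains to bound the central term,
     C(2l,l) C(2m,m) n^n <= 2 C(2n,n) C(n,l) l^l m^m   (central_term_bound).
   After squaring, this follows from three elementary estimates:
   - C(2l,l)^2 (3l+1) <= 16^l  and  16^n <= 4n C(2n,n)^2  (central binomials);
   - n^(2n+1) <= 8 C(n,l)^2 l^(2l+1) m^(2m+1): the right-hand side only
     decreases when (l, m) is unbalanced further, down to (1, n-1), because
     ((x+1)/x)^(2x+1) decreases in x (checked against a cubic Taylor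
     truncation of (1+t)^N) and equals 8 at x = 1;
   - 8 l m <= (3l+1)(3m+1). *)

Lemma central_binom_rec l :
  (l.+1 * 'C(2 * l.+1, l.+1) = 2 * (2 * l + 1) * 'C(2 * l, l))%N.
Proof.
have diag := mul_bin_diag (2 * l.+1) l.
have := mul_bin_down (2 * l + 1) l.
rewrite (_ : (2 * l.+1).-1 = 2 * l + 1)%N in diag; last by lia.
have [-> ->] : ((2 * l + 1).-1 = 2 * l /\ 2 * l + 1 - l = l.+1)%N by lia.
move=> down.
apply/eqP; rewrite -(eqn_pmul2l (ltn0Sn l)); apply/eqP.
by rewrite -diag -[(2 * (2 * l + 1) * _)%N]mulnA down; ring.
Qed.

Lemma central_binom_upper l : ('C(2 * l, l) ^ 2 * (3 * l + 1) <= 16 ^ l)%N.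
Proof.
elim: l => [|l IH]; first by rewrite muln0 bin0.
have pos : (0 < l.+1 ^ 2 * (3 * l + 1))%N by rewrite muln_gt0 expn_gt0 addn1.
rewrite -(leq_pmul2r pos).
have -> : ('C(2 * l.+1, l.+1) ^ 2 * (3 * l.+1 + 1) * (l.+1 ^ 2 * (3 * l + 1))
   = 4 * (2 * l + 1) ^ 2 * (3 * l + 4) * ('C(2 * l, l) ^ 2 * (3 * l + 1)))%N.
  rewrite (_ : 3 * l.+1 + 1 = 3 * l + 4)%N; last by lia.
  transitivity ((l.+1 * 'C(2 * l.+1, l.+1)) ^ 2 * (3 * l + 4) * (3 * l + 1))%N; first by ring.
  by rewrite central_binom_rec; ring.
apply: leq_trans (leq_mul (leqnn _) IH) _.
by rewrite (expnS 16) [(16 * _ * _)%N]mulnAC; apply: leq_mul => //; nia.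
Qed.

Lemma central_binom_lower {n} : (0 < n)%N -> (16 ^ n <= 4 * n * 'C(2 * n, n) ^ 2)%N.
Proof.
elim: n => [//|n IH] _; have [->//|n_gt0] := posnP n.
have pos : (0 < n * n.+1)%N by rewrite muln_gt0 n_gt0.
rewrite -(leq_pmul2r pos).
have -> : (4 * n.+1 * 'C(2 * n.+1, n.+1) ^ 2 * (n * n.+1)
   = 4 * (2 * n + 1) ^ 2 * (4 * n * 'C(2 * n, n) ^ 2))%N.
  transitivity (4 * n * (n.+1 * 'C(2 * n.+1, n.+1)) ^ 2)%N; first by ring.
  by rewrite central_binom_rec; ring.
apply: leq_trans (leq_mul (leqnn _) (IH n_gt0)).
by rewrite (expnS 16) [(16 * _ * _)%N]mulnAC; apply: leq_mul => //; nia.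
Qed.

Definition cubic_taylor (N : nat) (t : rat) : rat :=
  1 + N%:R * t + N%:R * (N%:R - 1) / 2 * t ^+ 2
    + N%:R * (N%:R - 1) * (N%:R - 2) / 6 * t ^+ 3.

Lemma falling3_ge0 N : 0 <= (N%:R : rat) * (N%:R - 1) * (N%:R - 2).
Proof.
case: N => [|[|k]]; first by rewrite mulr0n !mul0r.
  by rewrite mulr1n subrr mulr0 mul0r.
rewrite -addn2 natrD; have k_ge0 : 0 <= (k%:R : rat) by [].
by rewrite !mulr_ge0 //; lra.
Qed.

(* For t >= 0 the truncated expansion is below (1 + t)^N; the difference
   grows by C(N,3) t^4 at each step of the induction on N. *)
Lemma cubic_taylor_le N {t} : 0 <= t -> cubic_taylor N t <= (1 + t) ^+ N.
Proof.
move=> t_ge0; elim: N => [|N IH]; first by rewrite /cubic_taylor !mul0r !addr0.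
have step : (1 + t) * cubic_taylor N t = cubic_taylor N.+1 t
    + N%:R * (N%:R - 1) * (N%:R - 2) / 6 * t ^+ 4.
  by rewrite /cubic_taylor -addn1 natrD; field.
apply: le_trans (_ : (1 + t) * cubic_taylor N t <= _); last first.
  by rewrite exprS ler_wpM2l //; lra.
rewrite step lerDl mulr_ge0 ?exprn_ge0 // mulr_ge0 ?falling3_ge0 //.
Qed.

(* ((x+1)/x)^(2x+1), the factor gained in binom_weight by shifting one unit. *)
Definition expansion_ratio (x : nat) : rat := ((x.+1)%:R / x%:R) ^+ (2 * x + 1).

Lemma expansion_ratio_gt0 {x} : (0 < x)%N -> 0 < expansion_ratio x.
Proof. by move=> x_gt0; rewrite exprn_gt0 // divr_gt0 ?ltr0n. Qed.

(* Its value at x = 1 gives the constant 8 of binom_weight_lower. *)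
Lemma expansion_ratio_1 : expansion_ratio 1 = 8.
Proof. by rewrite /expansion_ratio /=; lra. Qed.

(* The ratio decreases: writing q = (x+2)/(x+1) and t = 1/(x(x+2)), one has
   ratio x = (q(1+t))^N and ratio (x+1) = q^N q^2 with N = 2x+1, and already
   q^2 <= cubic_taylor N t <= (1+t)^N. *)
Lemma expansion_ratio_decr x : (0 < x)%N -> expansion_ratio x.+1 <= expansion_ratio x.
Proof.
move=> x_gt0; set N := (2 * x + 1)%N.
have X_ge1 : (1 : rat) <= x%:R by rewrite ler1n.
set X : rat := x%:R in X_ge1 *.
have NX : (N%:R : rat) = 2 * X + 1 by rewrite natrD natrM.
have [X0 X1 X2] : [/\ X != 0, X + 1 != 0 & X + 2 != 0] by split; rewrite gt_eqF //; lra.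
set q := (X + 2) / (X + 1); set t := 1 / (X * (X + 2)).
have t_ge0 : 0 <= t by rewrite divr_ge0 // mulr_ge0 //; lra.
have -> : expansion_ratio x.+1 = q ^+ N * q ^+ 2.
  rewrite /expansion_ratio -exprD (_ : (2 * x.+1 + 1 = N + 2)%N); last by lia.
  by congr (_ ^+ _); rewrite /q -!natr1 -/X; ring.
have -> : expansion_ratio x = q ^+ N * (1 + t) ^+ N.
  rewrite /expansion_ratio -exprMn -/N -natr1 -/X /q /t; congr (_ ^+ _).
  by field; rewrite -/X X0 X1 X2.
apply: ler_wpM2l; first by rewrite exprn_ge0 // divr_ge0 //; lra.
apply: le_trans (cubic_taylor_le N t_ge0); rewrite -subr_ge0.
have -> : cubic_taylor N t - q ^+ 2 =
   (2 * X ^+ 5 + 10 * X ^+ 4 + 36 * X ^+ 3 + 32 * X ^+ 2 - 2 * X) /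
   (6 * (X * (X + 2)) ^+ 3 * (X + 1) ^+ 2).
  by rewrite /cubic_taylor NX /q /t; field; rewrite -/X X0 X1 X2.
by rewrite divr_ge0 ?mulr_ge0 ?exprn_ge0 //; nra.
Qed.

Lemma expansion_ratio_noninc {x y} :
  (0 < x)%N -> (x <= y)%N -> expansion_ratio y <= expansion_ratio x.
Proof.
move=> x_gt0 xy; have y_gt0 : (0 < y)%N by apply: leq_trans xy.
apply: (@homo_leq_in _ [pred i | 0 < i]%N _ (fun a b => b <= a)) => //.
- by move=> ? ? ? yx zy; apply: le_trans zy yx.
- by move=> i j; rewrite !inE => i_gt0 _ k /andP [/ltnW ik _]; rewrite inE (leq_trans i_gt0 ik).
- by move=> i /= ? _; apply: expansion_ratio_decr.
Qed.

(* C(l+m,l)^2 l^(2l+1) m^(2m+1): the square of C(n,l) l^l m^m, times l m. *)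
Definition binom_weight (l m : nat) : rat :=
  ('C(l + m, l))%:R ^+ 2 * l%:R ^+ (2 * l + 1) * m%:R ^+ (2 * m + 1).

Lemma binom_weight_ge0 l m : 0 <= binom_weight l m.
Proof. by rewrite /binom_weight !mulr_ge0 // exprn_ge0. Qed.

Lemma binom_weightC l m : binom_weight l m = binom_weight m l.
Proof.
have binC : 'C(l + m, m) = 'C(l + m, l) by rewrite -(bin_sub (leq_addr m l)) addKn.
by rewrite /binom_weight [(m + l)%N]addnC binC [RHS]mulrAC.
Qed.

Lemma binom_weight_shift l m : (0 < l)%N -> (0 < m)%N ->
  binom_weight l.+1 m * expansion_ratio m = binom_weight l m.+1 * expansion_ratio l.
Proof.
move=> l_gt0 m_gt0.
have pascal := mul_bin_left (l + m.+1) l.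
rewrite (_ : l + m.+1 - l = m.+1)%N in pascal; last by lia.
rewrite /binom_weight /expansion_ratio (_ : l.+1 + m = l + m.+1)%N; last by lia.
have [-> ->] : (2 * l.+1 + 1 = (2 * l + 1) + 2 /\ 2 * m.+1 + 1 = (2 * m + 1) + 2)%N.
  by lia.
set c' := 'C(_, l.+1) in pascal *; set c := 'C(_, l) in pascal *.
have L0 : (l%:R : rat) != 0 by rewrite pnatr_eq0 -lt0n.
have M0 : (m%:R : rat) != 0 by rewrite pnatr_eq0 -lt0n.
have L1 : (l%:R + 1 : rat) != 0 by rewrite natr1 pnatr_eq0.
have pascalR : (c'%:R : rat) = (m%:R + 1) * c%:R / (l%:R + 1).
  by apply: (canRL (mulfK L1)); rewrite mulrC !natr1 -!natrM pascal.
rewrite pascalR -!natr1 !expr_div_n !exprD; field.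
by rewrite L0 M0 L1 !expf_neq0.
Qed.

Lemma binom_weight_unbalance {l m} : (0 < l)%N -> (l <= m)%N ->
  binom_weight 1 (l + m - 1) <= binom_weight l m.
Proof.
elim: l m => [//|l IH] m _ lm; have [->|l_gt0] := posnP l; first by rewrite add1n subn1.
rewrite (_ : l.+1 + m - 1 = l + m.+1 - 1)%N; last by lia.
apply: le_trans (IH m.+1 l_gt0 _) _; first by lia.
have m_gt0 : (0 < m)%N by lia.
rewrite -(ler_pM2r (expansion_ratio_gt0 m_gt0)) binom_weight_shift //.
by rewrite ler_wpM2l ?binom_weight_ge0 ?expansion_ratio_noninc //; lia.
Qed.

(* n^(2n+1) <= 8 C(n,l)^2 l^(2l+1) m^(2m+1): a Stirling-type lower bound
   C(n,l) >= n^n / (l^l m^m) * sqrt(n / (8 l m)); equality holds at l = m = 1. *)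
Lemma binom_weight_lower {l m} : (0 < l)%N -> (0 < m)%N ->
  ((l + m)%:R : rat) ^+ (2 * (l + m) + 1) <= 8 * binom_weight l m.
Proof.
wlog lm : l m / (l <= m)%N.
  move=> wlog_lm l_gt0 m_gt0; have [lm|/ltnW ml] := leqP l m; first exact: wlog_lm.
  by rewrite addnC binom_weightC; apply: wlog_lm.
move=> l_gt0 m_gt0; set x := (l + m - 1)%N.
have [-> x_gt0] : (l + m = x.+1 /\ 0 < x)%N by rewrite /x; lia.
apply: le_trans (ler_wpM2l _ (binom_weight_unbalance l_gt0 lm)) => //.
have ratio := expansion_ratio_noninc (leqnn 1) x_gt0.
rewrite expansion_ratio_1 /expansion_ratio expr_div_n ler_pdivrMr ?exprn_gt0 ?ltr0n // in ratio.
rewrite /binom_weight -/x bin1 add1n expr1n mulr1 (_ : 2 * x.+1 + 1 = (2 * x + 1) + 2)%N;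
  last by lia.
by rewrite exprD mulrC [8 * _]mulrCA ler_pM2l ?exprn_gt0 ?ltr0n.
Qed.

Lemma central_term_bound l m : (0 < l)%N -> (0 < m)%N ->
  ('C(2 * l, l) * 'C(2 * m, m) * (l + m) ^ (l + m) <=
   2 * 'C(2 * (l + m), l + m) * ('C(l + m, l) * l ^ l * m ^ m))%N.
Proof.
move=> l_gt0 m_gt0.
have powS x : (x ^ (2 * x + 1) = x * (x ^ x) ^ 2)%N.
  by rewrite expnD expn1 [(2 * x)%N]mulnC expnM mulnC.
have weight := binom_weight_lower l_gt0 m_gt0.
rewrite /binom_weight -!natrX -!natrM ler_nat !powS in weight.
have n_gt0 : (0 < l + m)%N by rewrite addn_gt0 l_gt0.
have := central_binom_lower n_gt0.
have := central_binom_upper l; have := central_binom_upper m.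
move: weight.
set n := (l + m)%N; set a := 'C(2 * l, l); set b := 'C(2 * m, m).
set c := 'C(2 * n, n); set y := ('C(n, l) * l ^ l * m ^ m)%N.
rewrite (_ : _ * (l * _) * (m * _) = l * m * y ^ 2)%N; last by rewrite /y; ring.
move=> weight hb ha hc.
have K_gt0 : (0 < n * (3 * l + 1) * (3 * m + 1))%N by rewrite !muln_gt0 n_gt0 !addn1.
rewrite -(@leq_exp2r _ _ 2) // -(leq_pmul2r K_gt0).
apply: (@leq_trans (16 ^ l * 16 ^ m * (8 * (l * m * y ^ 2)))).
  rewrite (_ : _ * _ = a ^ 2 * (3 * l + 1) * (b ^ 2 * (3 * m + 1)) * (n * (n ^ n) ^ 2))%N;
    last by ring.
  by apply: leq_mul => //; apply: leq_mul.
rewrite -expnD -/n.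
apply: (@leq_trans (4 * n * c ^ 2 * (8 * (l * m * y ^ 2)))); first exact: leq_mul.
rewrite (_ : 4 * n * c ^ 2 * _ = 4 * n * c ^ 2 * y ^ 2 * (8 * (l * m)))%N; last by ring.
rewrite (_ : (2 * c * y) ^ 2 * _ = 4 * n * c ^ 2 * y ^ 2 * ((3 * l + 1) * (3 * m + 1)))%N;
  last by ring.
by apply: leq_mul => //; nia.
Qed.

Lemma unimodal_max {d : Order.disp_t} {T : porderType d} (f : nat -> T) (l n : nat) :
  (forall k, (k < l)%N -> (f k <= f k.+1)%O) ->
  (forall k, (l <= k < n)%N -> (f k.+1 <= f k)%O) ->
  forall k, (k <= n)%N -> (f k <= f l)%O.
Proof.
move=> up down k kn; have [kl|/ltnW lk] := leqP k l.
  apply: (@homo_leq_in _ [pred i | i <= l]%N _ (fun a b => a <= b)%O) => //.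
  - by move=> ? ? ?; apply: le_trans.
  - by move=> i j _; rewrite inE => jl i' /andP [_ /ltnW/leq_trans]; apply.
  - by move=> i _; rewrite inE => /up.
  - by rewrite inE.
have ln : (l <= n)%N by apply: leq_trans kn.
apply: (@homo_leq_in _ [pred i | l <= i <= n]%N f (fun a b => b <= a)%O _ _ _ _ l k) => //.
- by move=> ? ? ? yx zy; apply: le_trans zy yx.
- move=> i j; rewrite !inE => /andP [li _] /andP [_ jn] i' /andP [/ltnW ii' /ltnW i'j].
  by rewrite inE (leq_trans li ii') (leq_trans i'j jn).
- by move=> i; rewrite !inE => /andP [li _] /andP [_ in_]; apply: down; rewrite li.
- by rewrite inE leqnn.
- by rewrite inE lk.
Qed.

(* Numerators of the two probability mass functions with n = l + m:
   fixed_pmf = fixed_num / C(2n,n) and binom_pmf = indep_num / n^n. *)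
Definition fixed_num (l m k : nat) : nat := 'C(2 * l, k) * 'C(2 * m, l + m - k).

Definition indep_num (l m k : nat) : nat := 'C(l + m, k) * l ^ k * m ^ (l + m - k).

Lemma indep_num_gt0 {l m} k : (0 < l)%N -> (0 < m)%N -> (k <= l + m)%N -> (0 < indep_num l m k)%N.
Proof. by move=> l_gt0 m_gt0 km; rewrite !muln_gt0 bin_gt0 km !expn_gt0 l_gt0 m_gt0. Qed.

(* Consecutive ratios: with j = n - k - 1, the quotient of pmf_ratio at k+1 and
   at k is (2l-k) m / (l (2m-j)), stated without division. *)
Lemma ratio_step {l m k} : (k < l + m)%N ->
  (fixed_num l m k.+1 * indep_num l m k * (l * (2 * m - (l + m - k.+1)))
   = fixed_num l m k * indep_num l m k.+1 * ((2 * l - k) * m))%N.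
Proof.
move=> km; set j := (l + m - k.+1)%N.
have kj : (l + m - k = j.+1)%N by rewrite /j; lia.
rewrite /fixed_num /indep_num -/j kj.
have binN := mul_bin_left (l + m) k.
have binL := mul_bin_left (2 * l) k.
have binM := mul_bin_left (2 * m) j.
rewrite kj in binN.
set dm := (2 * m - j)%N in binM *; set dl := (2 * l - k)%N in binL *.
apply/eqP; rewrite -(eqn_pmul2l (ltn0Sn k)); apply/eqP.
transitivity ((k.+1 * 'C(2 * l, k.+1)) * (dm * 'C(2 * m, j))
              * 'C(l + m, k) * l ^ k.+1 * m ^ j.+1)%N; first by rewrite !expnS; ring.
rewrite binL -binM.
transitivity ('C(2 * l, k) * 'C(2 * m, j.+1) * (k.+1 * 'C(l + m, k.+1))
              * l ^ k.+1 * m ^ j * (dl * m))%N; last by ring.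
by rewrite binN (expnS m); ring.
Qed.

Lemma cross_mul_le {a b p q : nat} : (a * p = b * q)%N -> (p <= q)%N -> (0 < q)%N -> (b <= a)%N.
Proof. by move=> eq_ab pq q_gt0; rewrite -(leq_pmul2r q_gt0) -eq_ab leq_mul2l pq orbT. Qed.

Definition pmf_ratio (l m k : nat) : rat := (fixed_num l m k)%:R / (indep_num l m k)%:R.

Lemma pmf_ratio_le l m k k' : (0 < l)%N -> (0 < m)%N -> (k <= l + m)%N -> (k' <= l + m)%N ->
  (fixed_num l m k * indep_num l m k' <= fixed_num l m k' * indep_num l m k)%N ->
  pmf_ratio l m k <= pmf_ratio l m k'.
Proof.
move=> l_gt0 m_gt0 km k'm cross.
have pos k'' := indep_num_gt0 k'' l_gt0 m_gt0.
rewrite /pmf_ratio ler_pdivlMr ?ltr0n ?pos // mulrAC ler_pdivrMr ?ltr0n ?pos //.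
by rewrite -!natrM ler_nat.
Qed.

(* Below the mode, (2l-k) m >= l (2m-j). *)
Lemma pmf_ratio_incr l m k : (0 < m)%N -> (k < l)%N ->
  pmf_ratio l m k <= pmf_ratio l m k.+1.
Proof.
move=> m_gt0 kl; have l_gt0 : (0 < l)%N by apply: leq_ltn_trans kl.
have km : (k < l + m)%N by apply: leq_trans kl (leq_addr m l).
apply: pmf_ratio_le => //; first exact: ltnW.
apply: (cross_mul_le (ratio_step km)); first by nia.
by rewrite muln_gt0 subn_gt0 m_gt0 andbT; lia.
Qed.

(* From the mode on, (2l-k) m <= l (2m-j). *)
Lemma pmf_ratio_decr l m k : (0 < l)%N -> (0 < m)%N -> (l <= k < l + m)%N ->
  pmf_ratio l m k.+1 <= pmf_ratio l m k.
Proof.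
move=> l_gt0 m_gt0 /andP [lk km].
apply: pmf_ratio_le => //; first exact: ltnW.
apply: (cross_mul_le (esym (ratio_step km))); first by nia.
by rewrite muln_gt0 l_gt0 subn_gt0; lia.
Qed.

Lemma pmf_ratio_max l m k : (0 < l)%N -> (0 < m)%N -> (k <= l + m)%N ->
  pmf_ratio l m k <= pmf_ratio l m l.
Proof.
move=> l_gt0 m_gt0; apply: unimodal_max => i.
- exact: pmf_ratio_incr.
- exact: pmf_ratio_decr.
Qed.

Lemma fixed_pmfE l m k :
  fixed_pmf (l + m) l k = (fixed_num l m k)%:R / ('C(2 * (l + m), l + m))%:R.
Proof. by rewrite /fixed_pmf /fixed_num -mulnBr addKn. Qed.

(* With b = l/n we have 1 - b = m/n, so binom_pmf has denominator n^n. *)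
Lemma binom_pmfE l m k : (0 < l + m)%N -> (k <= l + m)%N ->
  binom_pmf (l + m) (l%:R / (l + m)%:R) k = (indep_num l m k)%:R / (l + m)%:R ^+ (l + m).
Proof.
move=> n_gt0 kn; have n_neq0 : ((l + m)%:R : rat) != 0 by rewrite pnatr_eq0 -lt0n.
rewrite /binom_pmf.
have -> : 1 - l%:R / (l + m)%:R = m%:R / (l + m)%:R :> rat.
  by apply: (canRL (mulfK n_neq0)); rewrite mulrBl divfK // mul1r natrD addrAC subrr add0r.
rewrite /indep_num !natrM !natrX !expr_div_n.
have -> : (l + m)%:R ^+ (l + m) = (l + m)%:R ^+ k * (l + m)%:R ^+ (l + m - k) :> rat.
  by rewrite -exprD subnKC.
by field; rewrite !expf_neq0.
Qed.

Lemma central_pmf_ratio l m : (0 < l)%N -> (0 < m)%N ->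
  pmf_ratio l m l * ((l + m)%:R ^+ (l + m) / ('C(2 * (l + m), l + m))%:R) <= 2.
Proof.
move=> l_gt0 m_gt0.
have Y_gt0 := indep_num_gt0 l l_gt0 m_gt0 (leq_addr m l).
have C_gt0 : (0 < 'C(2 * (l + m), l + m))%N by rewrite bin_gt0 leq_pmull.
rewrite /pmf_ratio mulf_div ler_pdivrMr; last by rewrite -natrM ltr0n muln_gt0 Y_gt0.
rewrite -natrX -!natrM ler_nat /fixed_num /indep_num addKn.
apply: leq_trans (central_term_bound l m l_gt0 m_gt0) (eq_leq _); ring.
Qed.

Theorem mainTheorem9 (n l k : nat) :
  (1 <= l)%N -> (l <= n - 1)%N -> (k <= n)%N ->
  fixed_pmf n l k / binom_pmf n (l%:R / n%:R) k <= 2.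
Proof.
move=> l_gt0 l_lt_n kn.
have [m m_gt0 nE] : exists2 m, (0 < m)%N & n = (l + m)%N by exists (n - l)%N; lia.
subst n; have n_gt0 : (0 < l + m)%N by rewrite addn_gt0 l_gt0.
have C_gt0 : (0 < 'C(2 * (l + m), l + m))%N by rewrite bin_gt0 leq_pmull.
have Y_gt0 := indep_num_gt0 k l_gt0 m_gt0 kn.
rewrite fixed_pmfE binom_pmfE //.
have -> : (fixed_num l m k)%:R / ('C(2 * (l + m), l + m))%:R
            / ((indep_num l m k)%:R / (l + m)%:R ^+ (l + m))
          = pmf_ratio l m k * ((l + m)%:R ^+ (l + m) / ('C(2 * (l + m), l + m))%:R).
  rewrite /pmf_ratio; field.
  by rewrite expf_neq0 !pnatr_eq0 -!lt0n ?C_gt0 ?Y_gt0.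
apply: le_trans _ (central_pmf_ratio l m l_gt0 m_gt0).
by apply: ler_wpM2r; [rewrite divr_ge0 // exprn_ge0 | exact: pmf_ratio_max].
Qed.
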